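(* Let $(\bar\alpha,\bar\beta)$ be a strict shifted pair of partitions and put $M=l(\bar\alpha)-l(\bar\beta)$. Define $g_1=0$ and, for $2\le i\le l(\bar\alpha)$, $g_i=(i-2)-\#\{j:\ \bar\beta_j\ge\bar\alpha_i\}$. Then every integer $t$ with $0\le t\le M-2$ occurs as some $g_i$, and setting $s_t=\min\{\bar\alpha_i:\ g_i=t\}$ we have $s_0\ge s_1\ge\cdots\ge s_{M-2}$.
   Context: A partition is a finite nonincreasing sequence of positive integers (possibly empty); $l(\lambda)$ is its number of parts. A pair of partitions $(\alpha,\beta)$ is strict shifted if $l(\alpha)>l(\beta)$ and $\alpha_{i+1}>\beta_i$ for $1\le i\le l(\beta)$. *)

From mathcomp Require Import all_boot all_order all_algebra.
Set Implicit Arguments. Unset Strict Implicit. Unset Printing Implicit Defensive.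
Import GRing.Theory Num.Theory.
Local Open Scope ring_scope.
Local Open Scope nat_scope.

Definition is_partition (s : seq nat) : bool :=
  sorted geq s && all (fun x => (0 < x)%N) s.

(* 1-indexed part lambda_i (0 outside the range 1..l(lambda)). *)
Definition part (s : seq nat) (i : nat) : nat := nth 0 s i.-1.

Definition strict_shifted (a b : seq nat) : bool :=
  ((size b < size a)%N) &&
  all (fun i => (part b i < part a i.+1)%N) (iota 1 (size b)).

Definition gval (a b : seq nat) (i : nat) : int :=
  if i == 1 then 0%R
  else (Posz (i - 2) - Posz (count (fun x => leq (part a i) x) b))%R.

Definition minseq (l : seq nat) : nat := foldr minn (head 0 l) l.

Definition s_seq (a b : seq nat) (t : nat) : nat :=
  minseq [seq part a i | i <- iota 1 (size a) & gval a b i == Posz t].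

From mathcomp Require Import all_boot all_order all_algebra.
From mathcomp Require Import zify.
Import Order.TTheory GRing.Theory Num.Theory.

Set Implicit Arguments.
Unset Strict Implicit.

(* Write L = l(alpha).  Since alpha is nonincreasing, the count
   #{j : beta_j >= alpha_i} can only grow with i, so the sequence g climbs by
   at most one per step: g_{i+1} <= g_i + 1 for i >= 1 (lemma gval_step).
   Moreover g_L >= (L - 2) - l(beta) >= t for every t <= M - 2 (gval_last).
   A discrete intermediate value theorem (int_ivt) then yields, for any index
   p with g_p <= t, an index q in [p, L] with g_q = t (gval_hits_after).
   Starting from g_1 = 0 this gives the first claim.  For the second, let p
   realise s_{t1} (so g_p = t1 <= t2); the index q >= p with g_q = t2 gives
   s_{t2} <= alpha_q <= alpha_p = s_{t1}. *)

Lemma part_mono (a : seq nat) (i j : nat) : is_partition a ->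
  (1 <= i <= j)%N -> (part a j <= part a i)%N.
Proof.
move=> /andP[sorted_a _] /andP[i_ge1 le_ij]; rewrite /part.
have [j_in | j_out] := ltnP j.-1 (size a); last by rewrite nth_default.
have le_pred : (i.-1 <= j.-1)%N by rewrite -!subn1 leq_sub2r.
have geq_trans : transitive geq by move=> y x z /= le_yx le_zy; exact: leq_trans le_zy le_yx.
exact: (sorted_leq_nth geq_trans leqnn 0 sorted_a _ _ (leq_ltn_trans le_pred j_in) j_in le_pred).
Qed.

Lemma gval_step (a b : seq nat) (i : nat) : is_partition a -> (1 <= i)%N ->
  (gval a b i.+1 <= gval a b i + 1)%R.
Proof.
move=> part_a i_ge1; rewrite /gval /=.
have [-> | i_ne1] := eqVneq i 1.
  by rewrite subnn sub0r add0r (le_trans _ ler01) // oppr_le0.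
have i_ge2 : (2 <= i)%N by rewrite ltn_neqAle eq_sym i_ne1 i_ge1.
have count_mono : (count (leq (part a i)) b <= count (leq (part a i.+1)) b)%N.
  apply: sub_count => x /= le_x; apply: leq_trans le_x.
  by apply: part_mono; rewrite // i_ge1 leqnSn.
rewrite eqSS (negbTE (lt0n_neq0 i_ge1)) (subSn i_ge2) -addn1 PoszD.
by rewrite [X in (_ <= X)%R]addrAC lerD2l lerN2 lez_nat.
Qed.

Lemma int_ivt (f : nat -> int) (lo hi : nat) (t : int) :
  (forall i, (lo <= i < hi)%N -> (f i.+1 <= f i + 1)%R) ->
  (lo <= hi)%N -> (f lo <= t)%R -> (t <= f hi)%R ->
  exists2 q, (lo <= q <= hi)%N & f q = t.
Proof.
elim: hi => [|hi IH] f_step le_lohi f_lo f_hi.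
  rewrite leqn0 in le_lohi; rewrite (eqP le_lohi) in f_lo *.
  by exists 0 => //; apply/eqP; rewrite eq_le f_lo.
have [f_hit | f_miss] := eqVneq (f hi.+1) t; first by exists hi.+1; rewrite ?le_lohi ?leqnn.
have lt_t : (t < f hi.+1)%R by rewrite lt_neqAle eq_sym f_miss f_hi.
have [le_lo | lt_lo] := leqP lo hi.
  have t_le : (t <= f hi)%R.
    by rewrite -ltzD1 (lt_le_trans lt_t) // f_step // le_lo /=.
  have f_step' i : (lo <= i < hi)%N -> (f i.+1 <= f i + 1)%R.
    by case/andP=> lo_i i_hi; rewrite f_step // lo_i ltnS ltnW.
  have [q /andP[lo_q q_hi] f_q] := IH f_step' le_lo f_lo t_le.
  by exists q; rewrite // lo_q ltnW.
have lo_eq : lo = hi.+1 by apply/eqP; rewrite eqn_leq le_lohi lt_lo.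
by move: lt_t; rewrite -lo_eq ltNge f_lo.
Qed.

Lemma gval_last (a b : seq nat) (t : nat) : (t + 2 <= size a - size b)%N ->
  (Posz t <= gval a b (size a))%R.
Proof.
move=> t_small; rewrite /gval; case: eqP => [? | _]; first by lia.
rewrite lerBrDr -PoszD lez_nat.
by apply: (@leq_trans (t + size b)); rewrite ?leq_add2l ?count_size //; lia.
Qed.

Lemma gval_hits_after (a b : seq nat) (t p : nat) : is_partition a ->
  (t + 2 <= size a - size b)%N -> (1 <= p <= size a)%N ->
  (gval a b p <= Posz t)%R ->
  exists2 q, (p <= q <= size a)%N & gval a b q = Posz t.
Proof.
move=> part_a t_small /andP[p_ge1 p_le] g_p.
apply: int_ivt => //; last exact: gval_last.
by move=> i /andP[p_i _]; apply: gval_step => //; apply: leq_trans p_i.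
Qed.

Lemma foldr_minn_le (d : nat) (l : seq nat) (x : nat) :
  x \in l -> (foldr minn d l <= x)%N.
Proof.
elim: l => //= y l IH; rewrite in_cons => /orP[/eqP-> | x_in].
  exact: geq_minl.
by rewrite geq_min IH ?orbT.
Qed.

Lemma foldr_minn_in (d : nat) (l : seq nat) : foldr minn d l \in d :: l.
Proof.
elim: l => [|y l IH] /=; first by rewrite mem_seq1.
rewrite /minn; case: ltnP => _; first by rewrite !in_cons eqxx orbT.
by move: IH; rewrite !in_cons => /orP[-> | ->]; rewrite ?orbT.
Qed.

Lemma minseq_in (l : seq nat) : l != [::] -> minseq l \in l.
Proof.
case: l => // x l _; rewrite /minseq [head _ _]/=.
by have /predU1P[-> | ] := foldr_minn_in x (x :: l); first exact: mem_head.
Qed.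

Lemma s_seq_le (a b : seq nat) (t q : nat) : (1 <= q <= size a)%N ->
  gval a b q = Posz t -> (s_seq a b t <= part a q)%N.
Proof.
move=> q_range g_q; apply: foldr_minn_le; apply: map_f.
by rewrite mem_filter g_q eqxx mem_iota add1n ltnS.
Qed.

Lemma s_seq_attained (a b : seq nat) (t i : nat) : (1 <= i <= size a)%N ->
  gval a b i = Posz t ->
  exists2 p, (1 <= p <= size a)%N /\ gval a b p = Posz t & s_seq a b t = part a p.
Proof.
move=> i_range g_i.
set l := [seq part a i | i <- iota 1 (size a) & gval a b i == Posz t].
have l_ne : l != [::].
  have : part a i \in l by rewrite map_f // mem_filter g_i eqxx mem_iota add1n ltnS.
  by case: (l).
have /mapP[p] := minseq_in l_ne; rewrite /s_seq -/l.
by rewrite mem_filter mem_iota add1n ltnS => /andP[/eqP g_p p_range] ->; exists p.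
Qed.

Theorem mainTheorem6 (a b : seq nat) :
  is_partition a -> is_partition b -> strict_shifted a b ->
  (forall t : nat, (t + 2 <= size a - size b)%N ->
     exists2 i, (1 <= i <= size a)%N & gval a b i = Posz t) /\
  (forall t1 t2 : nat, (t1 <= t2)%N -> (t2 + 2 <= size a - size b)%N ->
     (s_seq a b t2 <= s_seq a b t1)%N).
Proof.
move=> part_a _ _.
have occurs t : (t + 2 <= size a - size b)%N ->
    exists2 i, (1 <= i <= size a)%N & gval a b i = Posz t.
  move=> t_small; have one_range : (1 <= 1 <= size a)%N by lia.
  have [q /andP[q_ge1 q_le] g_q] := gval_hits_after part_a t_small one_range (lez_nat 0 t).
  by exists q; rewrite ?q_ge1.
split=> // t1 t2 le_t12 t2_small.
have t1_small : (t1 + 2 <= size a - size b)%N by lia.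
have [i i_range g_i] := occurs t1 t1_small.
have [p [p_range g_p] ->] := s_seq_attained i_range g_i.
have g_p_le : (gval a b p <= Posz t2)%R by rewrite g_p lez_nat.
have [q /andP[le_pq q_le] g_q] := gval_hits_after part_a t2_small p_range g_p_le.
have p_ge1 : (1 <= p)%N by case/andP: p_range.
have q_range : (1 <= q <= size a)%N by rewrite q_le (leq_trans p_ge1 le_pq).
apply: leq_trans (s_seq_le q_range g_q) _.
by apply: part_mono; rewrite // p_ge1 le_pq.
Qed.
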